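(* Let $\mu$ be a Borel probability measure on $[0,1]^k$, let $\mathcal E_1,\mathcal E_2,\dots$ be bounded Borel subsets of $\mathbb R^k$, put $\mathcal E_\infty=\limsup_{n\to\infty}\mathcal E_n$, and let $C\geqslant1$. For each $n$ let $f_n:\mathbb R^k\to[0,\infty)$ be bounded, measurable and supported on $\mathcal E_n$. Suppose the ETP and VTP hold for $(f_n)$ and $\mu$, that $\sum_{n=1}^\infty\lambda(f_n)=\infty$, and that \[ \sum_{m,n\leqslant N}\lambda(f_mf_n)\leqslant C\,E_N(\lambda)^2+O(1)\qquad(N\in\mathbb N). \] Then $\mu(\mathcal E_\infty)\geqslant1/C$.
   Context: $\lambda$ denotes Lebesgue measure on $[0,1]^k$, and for a measure $\nu$ on $[0,1]^k$, $\nu(f)=\int_{[0,1]^k}f\,d\nu$. Put \[ E_N(\nu)=\sum_{n\leqslant N}\nu(f_n),\qquad V_N(\nu)=\int_{[0,1]^k}\Big(\sum_{n\leqslant N}(f_n(\mathbf x)-\lambda(f_n))\Big)^2d\nu(\mathbf x). \] The expectation transference principle (ETP) holds if $E_N(\mu)=(1+o(1))E_N(\lambda)+O(1)$ as $N\to\infty$. The variance transference principle (VTP) holds if $V_N(\mu)=V_N(\lambda)+o(E_N(\mu)^2)+O(1)$ along some sequence of $N\to\infty$. *)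

From HB Require Import structures.
From mathcomp Require Import all_boot all_order all_algebra.
From mathcomp Require Import all_classical all_reals all_analysis.
Set Implicit Arguments. Unset Strict Implicit. Unset Printing Implicit Defensive.
Import Order.TTheory GRing.Theory Num.Theory.
Import numFieldNormedType.Exports.
Local Open Scope classical_set_scope.
Local Open Scope ring_scope.

(* Points of R^k are k-tuples of reals; k.-tuple R carries the product
   (= Borel) sigma-algebra generated by the coordinate projections. *)

Definition cube (R : realType) (k : nat) : set (k.-tuple R) :=
  [set x | forall i : 'I_k, 0 <= tnth x i <= 1].

Definition box (R : realType) (k : nat) (a b : k.-tuple R) : set (k.-tuple R) :=
  [set x | forall i : 'I_k, tnth a i <= tnth x i <= tnth b i].

(* lam is k-dimensional Lebesgue measure (on the Borel sets of R^k):
   it gives every box its volume. This characterizes it uniquely. *)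
Definition is_lebesgue (R : realType) (k : nat)
  (lam : set (k.-tuple R) -> \bar R) : Prop :=
  forall a b : k.-tuple R, (forall i, tnth a i <= tnth b i) ->
    lam (box a b) = (\prod_(i < k) (tnth b i - tnth a i))%:E.

Definition bounded_tset (R : realType) (k : nat) (E : set (k.-tuple R)) : Prop :=
  exists M : R, forall x, E x -> forall i : 'I_k, `|tnth x i| <= M.

Definition nuf (R : realType) (k : nat) (nu : {measure set (k.-tuple R) -> \bar R})
  (f : k.-tuple R -> R) : R := Rintegral nu (@cube R k) f.

(* E_N(nu) = sum_{n <= N} nu(f_n); f_n is (f (n-1)), i.e. sum over n < N *)
Definition EN (R : realType) (k : nat) (nu : {measure set (k.-tuple R) -> \bar R})
  (f : nat -> k.-tuple R -> R) (N : nat) : R :=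
  \sum_(n < N) nuf nu (f n).

Definition VN (R : realType) (k : nat) (lam nu : {measure set (k.-tuple R) -> \bar R})
  (f : nat -> k.-tuple R -> R) (N : nat) : R :=
  Rintegral nu (@cube R k)
    (fun x => (\sum_(n < N) (f n x - nuf lam (f n))) ^+ 2).

Definition ETP (R : realType) (k : nat) (lam mu : {measure set (k.-tuple R) -> \bar R})
  (f : nat -> k.-tuple R -> R) : Prop :=
  exists (a b : nat -> R),
    a @ \oo --> (0 : R) /\
    (exists M : R, \forall N \near \oo, `|b N| <= M) /\
    \forall N \near \oo, EN mu f N = (1 + a N) * EN lam f N + b N.

Definition VTP (R : realType) (k : nat) (lam mu : {measure set (k.-tuple R) -> \bar R})
  (f : nat -> k.-tuple R -> R) : Prop :=
  exists (Ns : nat -> nat) (a b : nat -> R),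
    {homo Ns : i j / (i < j)%N} /\
    a @ \oo --> (0 : R) /\
    (exists M : R, \forall j \near \oo, `|b j| <= M) /\
    \forall j \near \oo,
      VN lam mu f (Ns j) = VN lam lam f (Ns j) + a j * (EN mu f (Ns j)) ^+ 2 + b j.

From HB Require Import structures.
From mathcomp Require Import all_boot all_order all_algebra.
From mathcomp Require Import all_classical all_reals all_analysis.
From mathcomp Require Import measurable_realfun ring lra.

Set Implicit Arguments.
Unset Strict Implicit.
Unset Printing Implicit Defensive.

Import Order.TTheory GRing.Theory Num.Theory.
Import numFieldNormedType.Exports.
Local Open Scope classical_set_scope.
Local Open Scope ring_scope.

(* Write S_N for f_0 + ... + f_(N-1) and U_M for the tail union of the E_j, j >= M.
   For M <= N the increment S_N - S_M is at most S_N and vanishes off U_M, so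
   Cauchy-Schwarz gives (E_N(mu) - E_M(mu))^2 <= mu(S_N^2) mu(U_M).  Expanding the
   variances, the VTP and the correlation bound give
   mu(S_N^2) <= 2 E_N(lam) E_N(mu) + (C - 2) E_N(lam)^2 + o(E_N(mu)^2) + O(1), and the
   ETP gives E_N(mu) ~ E_N(lam) -> oo; dividing by E_N(lam)^2 along the VTP sequence
   yields mu(U_M) >= 1/C for every M.  Finally mu(limsup E_n) = lim_M mu(U_M). *)

Lemma measurable_cube {R : realType} {k : nat} : measurable (@cube R k).
Proof.
have -> : @cube R k = \bigcap_(i in [set: 'I_k]) ((fun x => tnth x i) @^-1` `[0, 1]).
  apply/seteqP; split => x /=.
    by move=> H i _ /=; rewrite in_itv /=; exact: H.
  by move=> H i; have := H i I; rewrite /= in_itv.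
apply: fin_bigcap_measurable => [|i _]; first exact: finite_finset.
by rewrite -[X in measurable X]setTI; exact: measurable_tnth.
Qed.

Lemma lebesgue_cube (R : realType) (k : nat) (lam : {measure set (k.-tuple R) -> \bar R}) :
  is_lebesgue lam -> lam (@cube R k) = 1%E.
Proof.
move=> hl; have -> : @cube R k = box [tuple (0:R) | i < k] [tuple (1:R) | i < k].
  by apply/seteqP; split => x /= H i; rewrite ?tnth_mktuple; have := H i; rewrite ?tnth_mktuple.
rewrite hl; last by move=> i; rewrite !tnth_mktuple ler01.
by rewrite big1 // => i _; rewrite !tnth_mktuple subr0.
Qed.

Definition bounded_measurable {R : realType} {k : nat} (g : k.-tuple R -> R) :=
  measurable_fun setT g /\ exists M : R, forall x, `|g x| <= M.

Section bounded_measurable.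
Variables (R : realType) (k : nat).
Implicit Types g h : k.-tuple R -> R.

Lemma bounded_measurable_cst (c : R) : bounded_measurable (fun _ : k.-tuple R => c).
Proof. by split => //; exists `|c|. Qed.

Lemma bounded_measurableD g h :
  bounded_measurable g -> bounded_measurable h -> bounded_measurable (g \+ h).
Proof.
move=> [mg [M hM]] [mh [N hN]]; split; first exact: measurable_funD.
by exists (M + N) => x; rewrite (le_trans (ler_normD _ _)) // lerD.
Qed.

Lemma bounded_measurableM g h :
  bounded_measurable g -> bounded_measurable h -> bounded_measurable (g \* h).
Proof.
move=> [mg [M hM]] [mh [N hN]]; split; first exact: measurable_funM.
by exists (M * N) => x; rewrite normrM ler_pM.
Qed.

Lemma bounded_measurableB g h :
  bounded_measurable g -> bounded_measurable h -> bounded_measurable (g \- h).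
Proof.
move=> [mg [M hM]] [mh [N hN]]; split; first exact: measurable_funB.
by exists (M + N) => x; rewrite (le_trans (ler_normB _ _)) // lerD.
Qed.

Lemma bounded_measurableX g n :
  bounded_measurable g -> bounded_measurable (fun x => g x ^+ n).
Proof.
move=> hg; elim: n => [|n IH]; first exact: bounded_measurable_cst.
by under eq_fun do rewrite exprS; exact: bounded_measurableM.
Qed.

Lemma bounded_measurable_sum (N : nat) (F : nat -> k.-tuple R -> R) :
  (forall i, bounded_measurable (F i)) ->
  bounded_measurable (fun x => \sum_(i < N) F i x).
Proof.
move=> hF; elim: N => [|N IH].
  by under eq_fun do rewrite big_ord0; exact: bounded_measurable_cst.
under eq_fun do rewrite big_ord_recr; exact: bounded_measurableD.
Qed.

End bounded_measurable.

Lemma sqr_le_of_forall_mul_le (R : realFieldType) (x Q p : R) :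
  0 <= x -> 0 <= Q -> 0 <= p ->
  (forall a, 0 < a -> 2 * a * x <= Q + a ^+ 2 * p) -> x ^+ 2 <= Q * p.
Proof.
move=> x0 Q0 p0 hQp; have [->|x_neq0] := eqVneq x 0; first by rewrite expr0n mulr_ge0.
have xpos : 0 < x by rewrite lt_def x_neq0.
have [p_eq0|p_neq0] := eqVneq p 0.
  have apos : 0 < (Q + 1) / (2 * x) by rewrite divr_gt0 ?mulr_gt0 // ltr_wpDl.
  have := hQp _ apos.
  have -> : 2 * ((Q + 1) / (2 * x)) * x = Q + 1 by field; rewrite gt_eqF.
  by rewrite p_eq0 mulr0 addr0; lra.
have ppos : 0 < p by rewrite lt_def p_neq0.
have := hQp (x / p) (divr_gt0 xpos ppos).
have -> : 2 * (x / p) * x = 2 * (x ^+ 2 / p) by field; rewrite gt_eqF.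
have -> : (x / p) ^+ 2 * p = x ^+ 2 / p by field; rewrite gt_eqF.
by move=> h; rewrite -ler_pdivrMr //; lra.
Qed.

Section cube_integral.
Variables (R : realType) (k : nat) (nu : {measure set (k.-tuple R) -> \bar R}).
Hypothesis nu_cube_fin : (nu (@cube R k) < +oo)%E.
Local Notation cube := (@cube R k).
Local Notation "'∫' g" := (Rintegral nu cube g) (at level 10, g at level 8).
Implicit Types g h : k.-tuple R -> R.

Lemma bounded_measurable_integrable g :
  bounded_measurable g -> nu.-integrable cube (EFin \o g).
Proof.
move=> [mg [M hM]]; apply: measurable_bounded_integrable => //.
- exact: measurable_cube.
- exact: measurable_funS mg.
- by exists M; split => [|y My x _]; [exact: num_real | exact: le_trans (hM x) (ltW My)].
Qed.

Lemma Rintegral_cubeD g h : bounded_measurable g -> bounded_measurable h ->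
  ∫ (g \+ h) = ∫ g + ∫ h.
Proof.
by move=> /bounded_measurable_integrable ? /bounded_measurable_integrable ?;
  rewrite RintegralD //; exact: measurable_cube.
Qed.

Lemma Rintegral_cubeB g h : bounded_measurable g -> bounded_measurable h ->
  ∫ (g \- h) = ∫ g - ∫ h.
Proof.
by move=> /bounded_measurable_integrable ? /bounded_measurable_integrable ?;
  rewrite RintegralB //; exact: measurable_cube.
Qed.

Lemma Rintegral_cubeZl (c : R) g : bounded_measurable g ->
  ∫ (fun x => c * g x) = c * ∫ g.
Proof.
by move=> /bounded_measurable_integrable ?; rewrite RintegralZl //; exact: measurable_cube.
Qed.

Lemma le_Rintegral_cube g h : bounded_measurable g -> bounded_measurable h ->
  (forall x, g x <= h x) -> ∫ g <= ∫ h.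
Proof.
move=> /bounded_measurable_integrable ? /bounded_measurable_integrable ? gh.
by apply: le_Rintegral => //; exact: measurable_cube.
Qed.

Lemma Rintegral_sum (N : nat) (F : nat -> k.-tuple R -> R) :
  (forall i, bounded_measurable (F i)) ->
  ∫ (fun x => \sum_(i < N) F i x) = \sum_(i < N) ∫ (F i).
Proof.
move=> hF; elim: N => [|N IH].
  under eq_fun do rewrite big_ord0.
  by rewrite big_ord0 Rintegral_cst ?mul0r //; exact: measurable_cube.
under eq_fun do rewrite big_ord_recr.
by rewrite Rintegral_cubeD ?IH ?big_ord_recr //; exact: bounded_measurable_sum.
Qed.

Variable f : nat -> k.-tuple R -> R.
Hypothesis f_bm : forall n, bounded_measurable (f n).
Local Notation S N := (fun x => \sum_(n < N) f n x).

Lemma EN_Rintegral N : EN nu f N = ∫ (S N).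
Proof. by rewrite Rintegral_sum. Qed.

Lemma Rintegral_sqr_sum N :
  ∫ (fun x => S N x ^+ 2) = \sum_(m < N) \sum_(n < N) nuf nu (fun x => f m x * f n x).
Proof.
have fmn_bm m n : bounded_measurable (fun x => f m x * f n x).
  exact: bounded_measurableM.
transitivity (\sum_(m < N) ∫ (fun x => \sum_(n < N) f m x * f n x)).
  rewrite -(@Rintegral_sum N (fun m x => \sum_(n < N) f m x * f n x)) => [|m].
    apply: eq_Rintegral => x _; rewrite expr2 mulr_suml; apply: eq_bigr => m _.
    by rewrite mulr_sumr.
  exact: (@bounded_measurable_sum _ _ N (fun n x => f m x * f n x)).
by apply: eq_bigr => m _; rewrite /nuf (@Rintegral_sum N (fun n x => f m x * f n x)).
Qed.

Lemma VN_expand (lam : {measure set (k.-tuple R) -> \bar R}) N :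
  nu cube = 1%E ->
  VN lam nu f N = ∫ (fun x => S N x ^+ 2) - 2 * EN lam f N * EN nu f N + EN lam f N ^+ 2.
Proof.
move=> nu1; set A := EN lam f N.
have S_bm : bounded_measurable (S N) by exact: bounded_measurable_sum.
rewrite /VN (@eq_Rintegral _ _ _ nu _ (fun x => S N x ^+ 2 + (- (2 * A)) * S N x + A ^+ 2));
  last by move=> x _; rewrite sumrB /A /EN; ring.
rewrite !Rintegral_cubeD ?Rintegral_cubeZl -?EN_Rintegral ?Rintegral_cst ?nu1 ?mulr1.
- by rewrite mulNr -expr2.
all: do ?[apply: bounded_measurableD | apply: bounded_measurableM].
all: by [exact: bounded_measurable_cst | exact: S_bm | exact: measurable_cube].
Qed.

Lemma sqr_Rintegral_le_mass g h (U : set (k.-tuple R)) : measurable U ->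
  bounded_measurable g -> bounded_measurable h ->
  (forall x, 0 <= g x <= h x) -> (forall x, ~ U x -> g x = 0) ->
  (∫ g) ^+ 2 <= ∫ (fun x => h x ^+ 2) * fine (nu (U `&` cube)).
Proof.
move=> mU g_bm h_bm gh g_out.
have U_bm : bounded_measurable (\1_U : k.-tuple R -> R).
  split; first exact: measurable_indic.
  by exists 1 => x; rewrite indicE; case: (x \in U); rewrite ?normr1 ?normr0.
have mass : fine (nu (U `&` cube)) = ∫ (\1_U : k.-tuple R -> R).
  by rewrite /Rintegral integral_indic //; exact: measurable_cube.
rewrite mass; apply: sqr_le_of_forall_mul_le.
- by apply: Rintegral_ge0 => x _; case/andP: (gh x).
- by apply: Rintegral_ge0 => x _; exact: sqr_ge0.
- by rewrite -mass fine_ge0.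
move=> a a_gt0.
(* Cauchy-Schwarz, in the form of AM-GM with a free parameter [a]. *)
have pointwise x : 2 * a * g x <= h x ^+ 2 + a ^+ 2 * \1_U x.
  have [Ux|nUx] := pselect (U x).
    rewrite indicE mem_set // mulr1.
    by have := sqr_ge0 (h x - a); case/andP: (gh x); nra.
  by rewrite g_out // indicE memNset // !mulr0 addr0 sqr_ge0.
have h2_bm : bounded_measurable (fun x => h x ^+ 2) by exact: bounded_measurableX.
have ag_bm : bounded_measurable (fun x => 2 * a * g x).
  by apply: bounded_measurableM => //; exact: bounded_measurable_cst.
have aU_bm : bounded_measurable (fun x => a ^+ 2 * \1_U x).
  by apply: bounded_measurableM => //; exact: bounded_measurable_cst.
rewrite -!Rintegral_cubeZl // -Rintegral_cubeD //.
by apply: le_Rintegral_cube pointwise => //; exact: bounded_measurableD.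
Qed.

Lemma sqr_EN_tail_le (E : nat -> set (k.-tuple R)) (M N : nat) :
  (forall n x, 0 <= f n x) -> (forall n x, ~ E n x -> f n x = 0) ->
  (forall n, measurable (E n)) -> (M <= N)%N ->
  (EN nu f N - EN nu f M) ^+ 2 <=
  ∫ (fun x => S N x ^+ 2) * fine (nu ((\bigcup_(j >= M) E j) `&` cube)).
Proof.
move=> f_ge0 fE mE MN; set T := S N \- S M.
have T_tail x : T x = \sum_(M <= n < N) f n x.
  rewrite /T /= -!(big_mkord xpredT (fun n => f n x)).
  by rewrite (big_cat_nat (leq0n M) MN) /= addrAC subrr add0r.
have S_bm n : bounded_measurable (S n) by exact: bounded_measurable_sum.
rewrite !EN_Rintegral -Rintegral_cubeB //; apply: sqr_Rintegral_le_mass.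
- by apply: bigcup_measurable => j _; exact: mE.
- exact: bounded_measurableB.
- exact: S_bm.
- move=> x; apply/andP; split; first by rewrite -/(T x) T_tail sumr_ge0.
  by rewrite lerBlDr lerDl sumr_ge0.
- move=> x Ux; rewrite -/(T x) T_tail big_nat_cond big1 // => n /andP[/andP[Mn _] _].
  by apply: fE => Enx; apply: Ux; exists n.
Qed.
End cube_integral.

Section asymptotics.
Variable R : realFieldType.
Implicit Types u v a b al : nat -> R.

Lemma bounded_divr_cvgy0 b u (M : R) : (\forall n \near \oo, `|b n| <= M) ->
  u @ \oo --> +oo -> (fun n => b n / u n) @ \oo --> 0.
Proof.
move=> bM uy; have upos : \forall n \near \oo, 0 < u n by move/cvgryPgt: uy; apply.
have invu0 : (fun n => (u n)^-1) @ \oo --> 0 by exact/(gtr0_cvgV0 upos).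
apply: (@squeeze_cvgr _ _ _ _ (fun n => - (M * (u n)^-1)) (fun n => M * (u n)^-1)).
- near=> n; have un : 0 < u n by near: n.
  rewrite -ler_norml normrM normfV (gtr0_norm un) ler_pM2r ?invr_gt0 //.
  by near: n.
- by rewrite -oppr0 -(mulr0 M); apply: cvgN; exact: cvgM (cvg_cst M) invu0.
- by rewrite -(mulr0 M); exact: cvgM (cvg_cst M) invu0.
Unshelve. all: end_near. Qed.

Lemma cvg_sqr u (l : R) : u @ \oo --> l -> (fun n => u n ^+ 2) @ \oo --> l ^+ 2.
Proof. by move=> ul; under eq_fun do rewrite expr2; rewrite expr2; exact: cvgM. Qed.

Lemma ratio_cvg1 u v a b (M : R) : u @ \oo --> +oo -> a @ \oo --> 0 ->
  (\forall n \near \oo, `|b n| <= M) ->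
  (\forall n \near \oo, v n = (1 + a n) * u n + b n) ->
  (fun n => v n / u n) @ \oo --> (1 : R).
Proof.
move=> uy a0 bM vE; have upos : \forall n \near \oo, 0 < u n by move/cvgryPgt: uy; apply.
have lim1 : (fun n => 1 + a n + b n / u n) @ \oo --> (1 + 0 + 0 : R).
  by apply: cvgD; [apply: cvgD => //; exact: cvg_cst | exact: bounded_divr_cvgy0 bM uy].
rewrite !addr0 in lim1; apply: (cvg_trans _ lim1); apply: near_eq_cvg; near=> n.
have un : u n != 0 by rewrite gt_eqF //; near: n.
have -> : v n = (1 + a n) * u n + b n by near: n.
by field.
Unshelve. all: end_near. Qed.

Lemma ler1_mul_of_near_sqr_le u v a b al (M c C K p : R) :
  u @ \oo --> +oo -> a @ \oo --> 0 -> (\forall n \near \oo, `|b n| <= M) ->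
  al @ \oo --> 0 -> (\forall n \near \oo, v n = (1 + a n) * u n + b n) ->
  (\forall n \near \oo, (v n - c) ^+ 2 <=
     (2 * u n * v n + (C - 2) * u n ^+ 2 + K + al n * v n ^+ 2) * p) ->
  1 <= C * p.
Proof.
move=> uy a0 bM al0 vE hle; have upos : \forall n \near \oo, 0 < u n by move/cvgryPgt: uy; apply.
have r1 := ratio_cvg1 uy a0 bM vE.
have invu0 : (fun n => (u n)^-1) @ \oo --> 0 by exact/(gtr0_cvgV0 upos).
set r := fun n => v n / u n in r1.
have lhs : (fun n => (r n - c * (u n)^-1) ^+ 2) @ \oo --> (1 - c * 0) ^+ 2.
  by apply: cvg_sqr; apply: cvgB => //; exact: cvgM (cvg_cst c) invu0.
have rhs : (fun n => (2 * r n + (C - 2) + K * (u n)^-1 ^+ 2 + al n * r n ^+ 2) * p)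
    @ \oo --> (2 * 1 + (C - 2) + K * 0 ^+ 2 + 0 * 1 ^+ 2) * p.
  apply: cvgM; last exact: cvg_cst.
  apply: cvgD; last exact: cvgM (cvg_sqr r1).
  apply: cvgD; last exact: cvgM (cvg_cst _) (cvg_sqr invu0).
  by apply: cvgD; [exact: cvgM (cvg_cst (2 : R)) r1 | exact: cvg_cst].
have lhs1 : (1 - c * 0) ^+ 2 = 1 :> R by rewrite mulr0 subr0 expr1n.
have rhsC : (2 * 1 + (C - 2) + K * 0 ^+ 2 + 0 * 1 ^+ 2) * p = C * p by ring.
rewrite -lhs1 -rhsC; apply: (ler_cvg_to lhs rhs); near=> n.
have un : 0 < u n by near: n.
rewrite /r -mulrBl expr_div_n ler_pdivrMr ?exprn_gt0 //.
have -> : (2 * (v n / u n) + (C - 2) + K * (u n)^-1 ^+ 2 + al n * (v n / u n) ^+ 2) * p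
    * u n ^+ 2 = (2 * u n * v n + (C - 2) * u n ^+ 2 + K + al n * v n ^+ 2) * p.
  by field; rewrite gt_eqF.
by near: n.
Unshelve. all: end_near. Qed.

End asymptotics.

Lemma homo_ltn_cvgny (s : nat -> nat) : {homo s : i j / (i < j)%N} -> s @ \oo --> \oo.
Proof.
move=> s_incr; have le_s j : (j <= s j)%N.
  by elim: j => // j IH; exact: leq_ltn_trans IH (s_incr _ _ (ltnSn j)).
by apply/cvgnyPge => A; near=> j; apply: leq_trans (le_s j); near: j; exact: nbhs_infty_ge.
Unshelve. all: end_near. Qed.

Lemma Rintegral_sqr_sum_transfer_le (R : realType) (k : nat)
    (lam mu : {measure set (k.-tuple R) -> \bar R}) (f : nat -> k.-tuple R -> R)
    (N : nat) (al be C M0 : R) :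
  lam (@cube R k) = 1%E -> mu (@cube R k) = 1%E -> (forall n, bounded_measurable (f n)) ->
  VN lam mu f N = VN lam lam f N + al * EN mu f N ^+ 2 + be ->
  \sum_(m < N) \sum_(n < N) nuf lam (fun x => f m x * f n x) <= C * EN lam f N ^+ 2 + M0 ->
  Rintegral mu (@cube R k) (fun x => (\sum_(n < N) f n x) ^+ 2) <=
  2 * EN lam f N * EN mu f N + (C - 2) * EN lam f N ^+ 2 + (M0 + be) + al * EN mu f N ^+ 2.
Proof.
move=> lam1 mu1 f_bm VTP_N corr_N.
have lam_fin : (lam (@cube R k) < +oo)%E by rewrite lam1 ltry.
have mu_fin : (mu (@cube R k) < +oo)%E by rewrite mu1 ltry.
rewrite (VN_expand mu_fin f_bm lam N mu1) (VN_expand lam_fin f_bm lam N lam1) in VTP_N.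
rewrite (Rintegral_sqr_sum lam_fin f_bm) in VTP_N.
rewrite -[2 * _ * EN lam f N]mulrA -expr2 in VTP_N.
lra.
Qed.

Lemma tail_mass_ge (R : realType) (k : nat)
    (lam mu : {measure set (k.-tuple R) -> \bar R}) (E : nat -> set (k.-tuple R))
    (C : R) (f : nat -> k.-tuple R -> R) (M : nat) :
  lam (@cube R k) = 1%E -> mu (@cube R k) = 1%E -> (forall n, measurable (E n)) ->
  0 < C -> (forall n, bounded_measurable (f n)) -> (forall n x, 0 <= f n x) ->
  (forall n x, ~ E n x -> f n x = 0) ->
  ETP lam mu f -> VTP lam mu f -> (fun N => EN lam f N) @ \oo --> +oo ->
  (exists M0 : R, forall N : nat,
     \sum_(m < N) \sum_(n < N) nuf lam (fun x => f m x * f n x)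
       <= C * (EN lam f N) ^+ 2 + M0) ->
  C^-1 <= fine (mu ((\bigcup_(j >= M) E j) `&` @cube R k)).
Proof.
move=> lam1 mu1 mE C_gt0 f_bm f_ge0 fE [a [b [a0 [[Mb bM] ETP_ab]]]]
  [Ns [al [be [Ns_incr [al0 [[Mbe beM] VTP_ab]]]]]] EN_y [M0 corr].
have mu_fin : (mu (@cube R k) < +oo)%E by rewrite mu1 ltry.
have Ns_y := homo_ltn_cvgny Ns_incr.
set p := fine _; have p_ge0 : 0 <= p by rewrite fine_ge0.
rewrite -(ler_pM2l C_gt0) mulfV ?gt_eqF //.
apply: (@ler1_mul_of_near_sqr_le _ (fun j => EN lam f (Ns j)) (fun j => EN mu f (Ns j))
  (a \o Ns) (b \o Ns) al Mb (EN mu f M) C (M0 + Mbe)) => //.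
- exact: cvg_comp Ns_y EN_y.
- exact: cvg_comp Ns_y a0.
- exact: Ns_y _ bM.
- exact: Ns_y _ ETP_ab.
near=> j.
have MN : (M <= Ns j)%N by near: j; exact: Ns_y _ (nbhs_infty_ge M).
have VTP_j : VN lam mu f (Ns j) = VN lam lam f (Ns j) + al j * EN mu f (Ns j) ^+ 2 + be j.
  by near: j; exact: VTP_ab.
have be_j : be j <= Mbe by apply: le_trans (ler_norm _) _; near: j; exact: beM.
move: (sqr_EN_tail_le mu_fin f_bm f_ge0 fE mE MN) => /le_trans; apply; rewrite -/p.
rewrite ler_wpM2r //; apply: le_trans (Rintegral_sqr_sum_transfer_le lam1 mu1 f_bm VTP_j (corr _)) _.
by rewrite lerD2r lerD2l lerD2l.
Unshelve. all: end_near. Qed.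

Theorem lemma2p3 (R : realType) (k : nat)
  (lam : {measure set (k.-tuple R) -> \bar R})
  (mu : probability (k.-tuple R) R)
  (E : nat -> set (k.-tuple R)) (C : R)
  (f : nat -> k.-tuple R -> R) :
  is_lebesgue lam ->
  mu (@cube R k) = 1%E ->
  (forall n, measurable (E n) /\ bounded_tset (E n)) ->
  1 <= C ->
  (forall n, measurable_fun setT (f n)) ->
  (forall n x, 0 <= f n x) ->
  (forall n, exists M : R, forall x, f n x <= M) ->
  (forall n x, ~ E n x -> f n x = 0) ->
  ETP lam mu f ->
  VTP lam mu f ->
  (fun N => EN lam f N) @ \oo --> +oo ->
  (exists M : R, forall N : nat,
     \sum_(m < N) \sum_(n < N) nuf lam (fun x => f m x * f n x)
       <= C * (EN lam f N) ^+ 2 + M) ->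
  ((C^-1)%:E <= mu (lim_sup_set E))%E.
Proof.
move=> lam_leb mu1 hE C_ge1 f_meas f_ge0 f_ub fE hETP hVTP EN_y corr.
have mE n : measurable (E n) by case: (hE n).
have f_bm n : bounded_measurable (f n).
  by split => //; have [Mn hMn] := f_ub n; exists Mn => x; rewrite ger0_norm.
have tail M := tail_mass_ge M (lebesgue_cube lam_leb) mu1 mE (lt_le_trans ltr01 C_ge1)
  f_bm f_ge0 fE hETP hVTP EN_y corr.
have mU M : measurable (\bigcup_(j >= M) E j) by apply: bigcup_measurable => j _.
have tails_lim := lim_sup_set_cvg mu E mE (le_lt_trans (probability_le1 mu (mU 0)) (ltry 1)).
rewrite -(cvg_lim _ tails_lim) //; apply: lime_ge; first exact: cvgP tails_lim.
have mcube : measurable (@cube R k) := measurable_cube.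
apply: nearW => M; apply: le_trans (measureIl mu (mU M) mcube).
rewrite -(fineK (fin_num_measure mu _ (measurableI _ _ (mU M) mcube))) lee_fin; exact: tail.
Qed.
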